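(* Let $(R_j)_{j=1}^\infty$ be a sequence of positive reals with $\inf_{j\ge1}R_j>0$, and for each $d$ let ${\bf R}=(R_1,\dots,R_d)$. Let $\alpha,\beta>0$. Then each of the approximation problems $\{I_d: W_2^{\bf R}(\mathbb T^d)\to L_2(\mathbb T^d)\}_{d\in\mathbb N_+}$ and $\{I_d: W_2^{\infty}(\mathbb T^d)\to L_2(\mathbb T^d)\}_{d\in\mathbb N_+}$ is $(\alpha,\beta)$-weakly tractable if and only if ($\alpha>2$ and $\beta>0$) or ($\alpha>0$ and $\beta>1$). In particular, both problems are intractable (not weakly tractable).
   Context: $W_2^{\bf R}(\mathbb T^d)$: Hilbert space of $f\in L_2(\mathbb T^d)$ (normalized measure) with norm $\big(\sum_{{\bf k}\in\mathbb Z^d}(1+\sum_{j=1}^d|k_j|^{2R_j})|\hat f({\bf k})|^2\big)^{1/2}$. $W_2^\infty(\mathbb T^d)$: trigonometric polynomials $\sum_{{\bf k}\in\{-1,0,1\}^d}\hat f({\bf k})e^{i{\bf k}\cdot{\bf x}}$ with norm $\big(\sum_{{\bf k}\in\{-1,0,1\}^d}(1+\sum_j|k_j|)|\hat f({\bf k})|^2\big)^{1/2}$ (the space $\bigwedge_{{\bf m}\in\mathbb N_+^d}W_2^{\bf m}(\mathbb T^d)$ with sup norm). For the identity embedding $I_d:H_d\to L_2(\mathbb T^d)$ (which has norm 1), the $n$th minimal worst-case error is $e(n,d)=a_{n+1}(I_d)$, where $a_n(T)=\inf\{\|T-A\|:\operatorname{rank}A<n\}$, and the information complexity is $n(\varepsilon,d)=\min\{n\in\mathbb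 N: e(n,d)\le\varepsilon\}$ for $\varepsilon\in(0,1)$. The problem is $(\alpha,\beta)$-weakly tractable if $\lim_{\varepsilon^{-1}+d\to\infty}\frac{\ln n(\varepsilon,d)}{\varepsilon^{-\alpha}+d^\beta}=0$; weakly tractable means $(1,1)$-weakly tractable, and intractable means not weakly tractable. *)

From Stdlib Require Import Reals ZArith List.
Import ListNotations.
Open Scope R_scope.

(* Complex numbers as pairs (Re, Im). *)
Definition Cx : Type := (R * R)%type.
Definition C0 : Cx := (0, 0).
Definition cadd (a b : Cx) : Cx := (fst a + fst b, snd a + snd b).
Definition cmul (a b : Cx) : Cx :=
  (fst a * fst b - snd a * snd b, fst a * snd b + snd a * fst b).
Definition cneg (a : Cx) : Cx := (- fst a, - snd a).
Definition cn2 (z : Cx) : R := fst z * fst z + snd z * snd z.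

(* A function on T^d is represented by its Fourier coefficients, indexed by
   k in Z^d, encoded as lists of integers of length d. *)
Definition Seq : Type := list Z -> Cx.
Definition idx (d : nat) (k : list Z) : Prop := length k = d.

Definition sadd (f g : Seq) : Seq := fun k => cadd (f k) (g k).
Definition ssub (f g : Seq) : Seq := fun k => cadd (f k) (cneg (g k)).
Definition sscal (a : Cx) (f : Seq) : Seq := fun k => cmul a (f k).
Fixpoint lincomb (cs : list Cx) (gs : list Seq) : Seq :=
  match cs, gs with
  | a :: cs', g :: gs' => sadd (sscal a g) (lincomb cs' gs')
  | _, _ => fun _ => C0
  end.

Fixpoint lsum (f : list Z -> R) (s : list (list Z)) : R :=
  match s with nil => 0 | k :: s' => f k + lsum f s' end.

(* sq_le w d c M  <->  sum_{k in Z^d} w(k) |c(k)|^2 <= M  (supremum of finite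
   partial sums, all terms being nonnegative). *)
Definition sq_le (w : list Z -> R) (d : nat) (c : Seq) (M : R) : Prop :=
  forall s : list (list Z), NoDup s -> (forall k, In k s -> idx d k) ->
    lsum (fun k => w k * cn2 (c k)) s <= M.

(* Membership in the weighted Hilbert space with weight w and frequency
   support S (coefficients vanish outside S and outside Z^d). *)
Definition inH (w : list Z -> R) (S : list Z -> Prop) (d : nat) (c : Seq) : Prop :=
  (forall k, ~ (idx d k /\ S k) -> c k = C0) /\ exists M, sq_le w d c M.

Definition one : list Z -> R := fun _ => 1.
(* L_2(T^d) (normalized measure), via Parseval. *)
Definition inL2 (d : nat) (g : Seq) : Prop := inH one (fun _ => True) d g.

(* a_{n+1}(I_d : H_d -> L_2) <= eps, i.e. e(n,d) <= eps:
   for every delta > 0 there is a linear A : H_d -> L_2 with rank <= n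
   (range inside the span of n elements of L_2) and ||I_d - A|| <= eps + delta. *)
Definition e_le (w : list Z -> R) (S : list Z -> Prop) (d n : nat) (eps : R) : Prop :=
  forall delta, 0 < delta ->
  exists (A : Seq -> Seq) (gs : list Seq),
    length gs = n /\
    (forall g, In g gs -> inL2 d g) /\
    (forall f g, inH w S d f -> inH w S d g -> A (sadd f g) = sadd (A f) (A g)) /\
    (forall a f, inH w S d f -> A (sscal a f) = sscal a (A f)) /\
    (forall f, inH w S d f -> exists cs, length cs = n /\ A f = lincomb cs gs) /\
    (forall f M, inH w S d f -> sq_le w d f M ->
       sq_le one d (ssub f (A f)) ((eps + delta) ^ 2 * M)).

Definition IsInfoComp (w : list Z -> R) (S : list Z -> Prop) (d : nat) (eps : R) (n : nat) : Prop :=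
  e_le w S d n eps /\ forall m, (m < n)%nat -> ~ e_le w S d m eps.

(* (alpha,beta)-weak tractability: n(eps,d) is finite, and
   ln n(eps,d) / (eps^-alpha + d^beta) -> 0 as eps^-1 + d -> infinity,
   eps in (0,1), d in N_+. *)
Definition WT (w : list Z -> R) (S : list Z -> Prop) (alpha beta : R) : Prop :=
  (forall eps d, 0 < eps < 1 -> (1 <= d)%nat -> exists n, IsInfoComp w S d eps n) /\
  forall eta, 0 < eta -> exists M, forall eps d n,
    0 < eps < 1 -> (1 <= d)%nat -> / eps + INR d > M -> IsInfoComp w S d eps n ->
    Rabs (ln (INR n) / (Rpower (/ eps) alpha + Rpower (INR d) beta)) <= eta.

(* |z|^(2r), with 0^(2r) = 0 (r > 0). *)
Definition pw (z : Z) (r : R) : R :=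
  if Z.eqb z 0 then 0 else Rpower (IZR (Z.abs z)) (2 * r).

Fixpoint wsumR (Rs : nat -> R) (j : nat) (k : list Z) : R :=
  match k with nil => 0 | z :: k' => pw z (Rs j) + wsumR Rs (S j) k' end.

(* W_2^R(T^d): weight 1 + sum_{j=1}^d |k_j|^{2R_j}, all frequencies. *)
Definition wR (Rs : nat -> R) (k : list Z) : R := 1 + wsumR Rs 1 k.
Definition SR : list Z -> Prop := fun _ => True.

(* W_2^infty(T^d): frequencies in {-1,0,1}^d, weight 1 + sum_j |k_j|. *)
Fixpoint abssum (k : list Z) : R :=
  match k with nil => 0 | z :: k' => IZR (Z.abs z) + abssum k' end.
Definition wInf (k : list Z) : R := 1 + abssum k.
Definition SInf (k : list Z) : Prop := Forall (fun z => (-1 <= z <= 1)%Z) k.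

(* Since the frequencies k form an orthogonal system, e(n,d) is governed by the weights:
   projecting onto the frequencies of weight < eps^-2 shows that n(eps,d) is at most their
   number, while a rank-n operator has a kernel vector supported on any n + 1 frequencies,
   so n(eps,d) >= N whenever N frequencies have weight at most W < eps^-2.
   Both weights dominate 1 + |k_j|^(2c) and 1 + #{j : k_j <> 0}; hence the frequencies of
   weight < eps^-2 lie in a box of side O(eps^(-1/c)) and have fewer than eps^-2 nonzero
   entries, giving ln n(eps,d) <= d ln (5 eps^(-1/c)) and
   ln n(eps,d) <= 2 eps^-2 ln (10 eps^(-1/c) d), both o(eps^-alpha + d^beta) when alpha > 2
   or beta > 1. Conversely the 2^d frequencies of {0,1}^d have weight at most d + 1, so
   n(eps,d) >= 2^d at eps = (d + 2)^(-1/2), which excludes alpha <= 2 and beta <= 1. *)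

From Stdlib Require Import Reals ZArith List Lia Lra Classical FunctionalExtensionality ClassicalEpsilon.
Import ListNotations.
Open Scope R_scope.

(** * Linear dependence *)

Fixpoint fsum (n : nat) (F : nat -> R) : R :=
  match n with O => 0 | S n' => fsum n' F + F n' end.

Lemma fsum_ext n F G : (forall j, (j < n)%nat -> F j = G j) -> fsum n F = fsum n G.
Proof.
  induction n; simpl; intros H; auto.
  rewrite IHn, (H n); [reflexivity|lia|intros; apply H; lia].
Qed.

Lemma fsum_plus n F G : fsum n (fun j => F j + G j) = fsum n F + fsum n G.
Proof. induction n; simpl; [lra|]. rewrite IHn; lra. Qed.

Lemma fsum_scal n a F : fsum n (fun j => a * F j) = a * fsum n F.
Proof. induction n; simpl; [lra|]. rewrite IHn; lra. Qed.

Lemma fsum_zero n F : (forall j, (j < n)%nat -> F j = 0) -> fsum n F = 0.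
Proof. induction n; simpl; intros H; auto. rewrite IHn, H; [lra|lia|intros; apply H; lia]. Qed.

Lemma fsum_first n F : fsum (S n) F = F O + fsum n (fun j => F (S j)).
Proof. induction n; simpl in *; [lra|]. rewrite IHn. lra. Qed.

Lemma fsum_add m n F : fsum (m + n) F = fsum m F + fsum n (fun j => F (m + j)%nat).
Proof.
  induction n; simpl; [rewrite Nat.add_0_r; lra|].
  rewrite Nat.add_succ_r; simpl. rewrite IHn. lra.
Qed.

Lemma fsum_delta n l F : (l < n)%nat ->
  (forall j, (j < n)%nat -> j <> l -> F j = 0) -> fsum n F = F l.
Proof.
  induction n; intros Hl H; [lia|]. simpl.
  destruct (Nat.eq_dec l n) as [->|Hne].
  - rewrite fsum_zero by (intros; apply H; lia). lra.
  - rewrite IHn, (H n); [lra|lia|lia|lia|intros; apply H; lia].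
Qed.

Definition skip (j0 j : nat) : nat := if Nat.ltb j j0 then j else S j.
Definition unskip (j0 j : nat) : nat := if Nat.ltb j j0 then j else pred j.

Lemma skip_lt j0 j p : (j < p)%nat -> (skip j0 j < S p)%nat.
Proof. unfold skip; destruct (Nat.ltb_spec j j0); lia. Qed.

Lemma skip_neq j0 j : skip j0 j <> j0.
Proof. unfold skip; destruct (Nat.ltb_spec j j0); lia. Qed.

Lemma unskip_skip j0 j : unskip j0 (skip j0 j) = j.
Proof.
  unfold skip, unskip; destruct (Nat.ltb_spec j j0);
    [destruct (Nat.ltb_spec j j0)|destruct (Nat.ltb_spec (S j) j0)]; lia.
Qed.

Lemma fsum_skip p F j0 : (j0 < S p)%nat ->
  fsum (S p) F = F j0 + fsum p (fun j => F (skip j0 j)).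
Proof.
  revert j0; induction p; intros j0 Hj.
  - replace j0 with O by lia. simpl. lra.
  - change (fsum (S (S p)) F) with (fsum (S p) F + F (S p)).
    destruct (Nat.eq_dec j0 (S p)) as [->|Hne].
    + rewrite (fsum_ext (S p) (fun j => F (skip (S p) j)) F); [lra|].
      intros j Hj'. unfold skip. destruct (Nat.ltb_spec j (S p)); [reflexivity|lia].
    + rewrite (IHp j0) by lia. simpl.
      unfold skip at 3. destruct (Nat.ltb_spec p j0); [lia|]. lra.
Qed.

Lemma fsum_lin_dep (T : Type) : forall q p (v u : nat -> T -> R) (C : nat -> nat -> R),
  (q < p)%nat ->
  (forall j t, (j < p)%nat -> v j t = fsum q (fun i => C j i * u i t)) ->
  exists x : nat -> R, (exists j, (j < p)%nat /\ x j <> 0) /\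
     forall t, fsum p (fun j => x j * v j t) = 0.
Proof.
  induction q; intros p v u C Hqp Hv.
  - exists (fun _ => 1). split; [exists O; split; [lia|lra]|].
    intros t. apply fsum_zero. intros j Hj. rewrite Hv by auto. simpl. lra.
  - destruct (classic (exists j0, (j0 < p)%nat /\ C j0 q <> 0)) as [[j0 [Hj0 Hc]]|Hn].
    + destruct p as [|p]; [lia|].
      set (r := fun j => C (skip j0 j) q / C j0 q).
      (* eliminate the last generator [u q] using the pivot row [j0] *)
      destruct (IHq p (fun j t => v (skip j0 j) t - r j * v j0 t) u
                  (fun j i => C (skip j0 j) i - r j * C j0 i)) as [y [[j1 [Hj1 Hy]] Hs]];
        [lia|..].
      { intros j t Hj. rewrite !Hv by (try apply skip_lt; auto). simpl.
        assert (Hpiv : C (skip j0 j) q - r j * C j0 q = 0) by (unfold r; field; auto).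
        rewrite (fsum_ext q (fun i => (C (skip j0 j) i - r j * C j0 i) * u i t)
          (fun i => C (skip j0 j) i * u i t + (- r j) * (C j0 i * u i t))) by (intros; ring).
        rewrite fsum_plus, fsum_scal.
        transitivity (fsum q (fun i => C (skip j0 j) i * u i t)
          + - r j * fsum q (fun i => C j0 i * u i t) + (C (skip j0 j) q - r j * C j0 q) * u q t);
          [ring|]. rewrite Hpiv. ring. }
      set (X := - fsum p (fun j' => y j' * r j')).
      exists (fun j => if Nat.eqb j j0 then X else y (unskip j0 j)). split.
      * exists (skip j0 j1). split; [apply skip_lt; auto|].
        destruct (Nat.eqb_spec (skip j0 j1) j0) as [E|_]; [exfalso; eapply skip_neq; eauto|].
        rewrite unskip_skip. auto.
      * intros t. rewrite (fsum_skip p _ j0 Hj0), Nat.eqb_refl.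
        rewrite (fsum_ext p _ (fun j => y j * (v (skip j0 j) t - r j * v j0 t) + v j0 t * (y j * r j))).
        { rewrite fsum_plus, Hs, fsum_scal. unfold X. ring. }
        intros j Hj. destruct (Nat.eqb_spec (skip j0 j) j0) as [E|_]; [exfalso; eapply skip_neq; eauto|].
        rewrite unskip_skip. ring.
    + apply (IHq p v u C); [lia|]. intros j t Hj. rewrite Hv by auto. simpl.
      assert (Hz : C j q = 0) by (apply NNPP; intros Hne; apply Hn; eauto).
      rewrite Hz. ring.
Qed.

(** * Upper bound by truncation *)

Definition zlist_eq_dec := list_eq_dec Z.eq_dec.

Lemma lsum_le f g s : (forall k, In k s -> f k <= g k) -> lsum f s <= lsum g s.
Proof.
  induction s as [|a s IH]; simpl; intros H; [lra|].
  pose proof (H a (or_introl eq_refl)). pose proof (IH (fun k Hk => H k (or_intror Hk))). lra.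
Qed.

Lemma lsum_ext f g s : (forall k, In k s -> f k = g k) -> lsum f s = lsum g s.
Proof. intros H. apply Rle_antisym; apply lsum_le; intros k Hk; rewrite H; auto; lra. Qed.

Lemma lsum_scal a f s : lsum (fun k => a * f k) s = a * lsum f s.
Proof. induction s; simpl; [ring|]. rewrite IHs; ring. Qed.

Lemma lsum_nonneg f s : (forall k, In k s -> 0 <= f k) -> 0 <= lsum f s.
Proof. intros H. apply Rle_trans with (lsum (fun _ => 0) s); [clear H; induction s; simpl; lra|]. now apply lsum_le. Qed.

Lemma lsum_mem f s k : (forall k, In k s -> 0 <= f k) -> In k s -> f k <= lsum f s.
Proof.
  induction s as [|a s IH]; simpl; intros H Hk; [tauto|].
  assert (0 <= lsum f s) by (apply lsum_nonneg; auto).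
  pose proof (H a (or_introl eq_refl)).
  destruct Hk as [<-|Hk]; [lra|]. pose proof (IH (fun k Hk => H k (or_intror Hk)) Hk). lra.
Qed.

Lemma lsum_remove_le g a L : (forall k, In k L -> 0 <= g k) ->
  lsum g (remove zlist_eq_dec a L) <= lsum g L.
Proof.
  induction L as [|b L IH]; simpl; intros H; [lra|].
  pose proof (H b (or_introl eq_refl)). specialize (IH (fun k Hk => H k (or_intror Hk))).
  destruct (zlist_eq_dec a b); simpl; lra.
Qed.

Lemma lsum_remove g a L : In a L -> (forall k, In k L -> 0 <= g k) ->
  g a + lsum g (remove zlist_eq_dec a L) <= lsum g L.
Proof.
  induction L as [|b L IH]; simpl; intros Ha H; [tauto|].
  destruct (zlist_eq_dec a b) as [<-|Hab].
  - pose proof (lsum_remove_le g a L (fun k Hk => H k (or_intror Hk))). lra.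
  - destruct Ha as [->|Ha]; [tauto|]. simpl.
    pose proof (IH Ha (fun k Hk => H k (or_intror Hk))). lra.
Qed.

Lemma lsum_support g s L : NoDup s -> (forall k, In k L -> 0 <= g k) ->
  (forall k, In k s -> ~ In k L -> g k = 0) -> lsum g s <= lsum g L.
Proof.
  revert L; induction s as [|a s IH]; intros L Hs Hpos Hz; simpl; [now apply lsum_nonneg|].
  inversion Hs as [|? ? Ha Hs']; subst.
  destruct (in_dec zlist_eq_dec a L) as [Hin|Hout].
  - assert (lsum g s <= lsum g (remove zlist_eq_dec a L)).
    { apply IH; auto.
      - intros k Hk; apply Hpos, (in_remove zlist_eq_dec L k a Hk).
      - intros k Hk Hn. apply Hz; [now right|]. intros HL. apply Hn, in_in_remove; auto.
        intros ->; auto. }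
    pose proof (lsum_remove g a L Hin Hpos). lra.
  - assert (lsum g s <= lsum g L) by (apply IH; auto; intros; apply Hz; simpl; auto).
    rewrite (Hz a (or_introl eq_refl) Hout). lra.
Qed.

Lemma cn2_nonneg z : 0 <= cn2 z.
Proof. unfold cn2. nra. Qed.

Lemma cn2_C0 : cn2 C0 = 0.
Proof. unfold cn2, C0; simpl; ring. Qed.

Lemma inH_finite_support w S d c L : (forall k, 0 <= w k) ->
  (forall k, In k L -> idx d k /\ S k) -> (forall k, ~ In k L -> c k = C0) ->
  inH w S d c /\ sq_le w d c (lsum (fun k => w k * cn2 (c k)) L).
Proof.
  intros Hw HL Hc.
  assert (Hsq : sq_le w d c (lsum (fun k => w k * cn2 (c k)) L)).
  { intros s Hs _. apply lsum_support; auto.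
    - intros k _. pose proof (Hw k); pose proof (cn2_nonneg (c k)); nra.
    - intros k _ Hk. rewrite Hc, cn2_C0 by auto. ring. }
  split; [split; [|eexists; exact Hsq]|exact Hsq].
  intros k Hk. apply Hc. intros Hin. apply Hk, HL, Hin.
Qed.

Definition unit_seq (k0 : list Z) : Seq := fun k => if zlist_eq_dec k k0 then (1, 0) else C0.

Definition restrict (L : list (list Z)) (f : Seq) : Seq :=
  fun k => if in_dec zlist_eq_dec k L then f k else C0.

Lemma lincomb_unit_seq f L : NoDup L -> lincomb (map f L) (map unit_seq L) = restrict L f.
Proof.
  induction L as [|a L IH]; intros HL; cbn [map lincomb].
  - apply functional_extensionality; intros k; reflexivity.
  - inversion HL; subst. rewrite IH by auto. apply functional_extensionality. intros k.
    unfold sadd, sscal, unit_seq, restrict, cadd, cmul, C0.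
    destruct (zlist_eq_dec k a) as [->|Hka]; destruct (in_dec zlist_eq_dec _ (a :: L)) as [Hin|Hin];
      destruct (in_dec zlist_eq_dec _ L); simpl in Hin; try tauto;
      try (destruct Hin; congruence);
      apply injective_projections; cbn [fst snd]; ring.
Qed.

Lemma restrict_error w S d eps L f M : (forall k, 0 <= w k) ->
  (forall k, idx d k -> S k -> ~ In k L -> 1 <= eps ^ 2 * w k) ->
  inH w S d f -> sq_le w d f M -> sq_le one d (ssub f (restrict L f)) (eps ^ 2 * M).
Proof.
  intros Hw Hout [Hsupp _] Hf s Hs Hsidx.
  apply Rle_trans with (lsum (fun k => eps ^ 2 * (w k * cn2 (f k))) s);
    [|rewrite lsum_scal; apply Rmult_le_compat_l; [apply pow2_ge_0|auto]].
  apply lsum_le. intros k Hk. unfold one, ssub, restrict.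
  pose proof (cn2_nonneg (f k)); pose proof (Hw k).
  destruct (in_dec zlist_eq_dec k L).
  - replace (cadd (f k) (cneg (f k))) with C0
      by (unfold cadd, cneg, C0; apply injective_projections; simpl; ring).
    rewrite cn2_C0, Rmult_0_r.
    apply Rmult_le_pos; [apply pow2_ge_0|now apply Rmult_le_pos].
  - replace (cadd (f k) (cneg C0)) with (f k)
      by (unfold cadd, cneg, C0; apply injective_projections; simpl; ring).
    destruct (classic (S k)) as [HS|HS].
    + assert (1 <= eps ^ 2 * w k) by (apply Hout; auto). nra.
    + rewrite (Hsupp k), cn2_C0 by tauto. nra.
Qed.

Lemma e_le_truncation w S d eps L : (forall k, 0 <= w k) -> 0 < eps ->
  (forall k, In k L -> idx d k) ->
  (forall k, idx d k -> S k -> ~ In k L -> 1 <= eps ^ 2 * w k) ->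
  e_le w S d (length (nodup zlist_eq_dec L)) eps.
Proof.
  intros Hw He HL Hout delta Hd.
  set (L' := nodup zlist_eq_dec L).
  assert (HinL : forall k, In k L' <-> In k L) by (intros; apply nodup_In).
  exists (restrict L'), (map unit_seq L').
  split; [apply length_map|]. split; [|split; [|split; [|split]]].
  - intros g Hg. apply in_map_iff in Hg. destruct Hg as [k0 [<- Hk0]].
    apply (inH_finite_support one (fun _ => True) d (unit_seq k0) [k0]).
    + intros; unfold one; lra.
    + intros k [<-|[]]. split; auto. apply HL, HinL; auto.
    + intros k Hk. unfold unit_seq. destruct (zlist_eq_dec k k0) as [->|]; [simpl in Hk; tauto|auto].
  - intros f g _ _. apply functional_extensionality; intros k. unfold restrict, sadd.
    destruct (in_dec zlist_eq_dec k L'); auto. unfold cadd, C0; simpl; f_equal; ring.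
  - intros a f _. apply functional_extensionality; intros k. unfold restrict, sscal.
    destruct (in_dec zlist_eq_dec k L'); auto. unfold cmul, C0; simpl; f_equal; ring.
  - intros f _. exists (map f L'). split; [apply length_map|].
    symmetry; apply lincomb_unit_seq, NoDup_nodup.
  - intros f M Hf HM s Hs Hsidx.
    assert (0 <= M) by (apply (HM nil); [constructor|simpl; tauto]).
    apply Rle_trans with (eps ^ 2 * M).
    + apply (restrict_error w S d eps L' f M); auto.
      intros k Hk HS HnL. apply Hout; auto. now rewrite <- HinL.
    + apply Rmult_le_compat_r; [auto|]. nra.
Qed.

(** * Lower bound by a kernel vector *)

Definition part (b : bool) (z : Cx) : R := if b then fst z else snd z.

Lemma part_cadd b x y : part b (cadd x y) = part b x + part b y.
Proof. destruct b; reflexivity. Qed.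

Lemma part_C0 b : part b C0 = 0.
Proof. destruct b; reflexivity. Qed.

Lemma part_cmul b c z : part b (cmul c z) = fst c * part b z + snd c * part b (cmul (0, 1) z).
Proof. destruct b, c, z; unfold part, cmul; simpl; ring. Qed.

Lemma part_cmul_real b x z : part b (cmul (x, 0) z) = x * part b z.
Proof. destruct b, z; unfold part, cmul; simpl; ring. Qed.

Lemma part_eq_C0 z : (forall b, part b z = 0) -> z = C0.
Proof. intros H. destruct z as [x y]. unfold C0. f_equal; [apply (H true)|apply (H false)]. Qed.

Definition zero_seq : Seq := fun _ => C0.

Fixpoint fsumS (n : nat) (F : nat -> Seq) : Seq :=
  match n with O => zero_seq | S n' => sadd (fsumS n' F) (F n') end.

Lemma part_fsumS b n F k : part b (fsumS n F k) = fsum n (fun j => part b (F j k)).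
Proof. induction n; simpl; [apply part_C0|]. unfold sadd. rewrite part_cadd, IHn. reflexivity. Qed.

Lemma fsumS_zero n F k : (forall j, (j < n)%nat -> F j k = C0) -> fsumS n F k = C0.
Proof.
  intros H. apply part_eq_C0. intros b. rewrite part_fsumS. apply fsum_zero.
  intros j Hj. rewrite H by auto. apply part_C0.
Qed.

Lemma part_lincomb b k cs gs : length cs = length gs ->
  part b (lincomb cs gs k)
  = fsum (length cs) (fun i => part b (cmul (nth i cs C0) (nth i gs zero_seq k))).
Proof.
  revert gs; induction cs; intros gs Hl; destruct gs; cbn [length lincomb] in *; try lia.
  - apply part_C0.
  - unfold sadd, sscal. rewrite part_cadd, (IHcs gs), fsum_first by lia. reflexivity.
Qed.

Lemma linear_fsumS (P : Seq -> Prop) (A : Seq -> Seq) n F :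
  (forall f g, P f -> P g -> A (sadd f g) = sadd (A f) (A g)) ->
  (forall a f, P f -> A (sscal a f) = sscal a (A f)) ->
  (forall j, (j < n)%nat -> P (F j)) -> (forall j, (j <= n)%nat -> P (fsumS j F)) ->
  A (fsumS n F) = fsumS n (fun j => A (F j)).
Proof.
  intros Hadd Hsc HF HS. induction n; simpl.
  - assert (Hz : forall f, sscal C0 f = zero_seq)
      by (intros f; apply functional_extensionality; intros k;
          unfold sscal, cmul, C0, zero_seq; apply injective_projections; simpl; ring).
    transitivity (A (sscal C0 zero_seq)); [now rewrite Hz|].
    rewrite Hsc; [apply Hz|apply (HS O); lia].
  - rewrite Hadd, IHn; auto; intros; apply HF || apply HS; lia.
Qed.

(* The [2N] sequences [e_k] and [i e_k] (k in L, N = length L) form a real basis of the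
   sequences supported on [L]; index [j] picks position [basis_pos N j] of [L]. *)
Definition basis_pos N j := if Nat.ltb j N then j else (j - N)%nat.
Definition basis_val N j : Cx := if Nat.ltb j N then (1, 0) else (0, 1).
Definition real_basis (L : list (list Z)) j : Seq :=
  fun k => if zlist_eq_dec k (nth (basis_pos (length L) j) L nil) then basis_val (length L) j else C0.

Lemma basis_pos_lt N j : (j < N + N)%nat -> (basis_pos N j < N)%nat.
Proof. unfold basis_pos. destruct (Nat.ltb_spec j N); lia. Qed.

Lemma real_basis_support L j k : (j < length L + length L)%nat -> ~ In k L -> real_basis L j k = C0.
Proof.
  intros Hj Hk. unfold real_basis. destruct (zlist_eq_dec _ _) as [->|]; [|reflexivity].
  exfalso. apply Hk, nth_In, basis_pos_lt, Hj.
Qed.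

Lemma part_real_basis L j j0 : NoDup L ->
  (j < length L + length L)%nat -> (j0 < length L + length L)%nat ->
  part (Nat.ltb j0 (length L)) (real_basis L j (nth (basis_pos (length L) j0) L nil))
  = if Nat.eqb j j0 then 1 else 0.
Proof.
  intros HL Hj Hj0. unfold real_basis.
  destruct (zlist_eq_dec _ _) as [E|E].
  - apply (proj1 (NoDup_nth L nil) HL) in E; try apply basis_pos_lt; auto.
    revert E. unfold basis_pos, basis_val.
    destruct (Nat.eqb_spec j j0), (Nat.ltb_spec j (length L)), (Nat.ltb_spec j0 (length L));
      intros; subst; simpl; try reflexivity; lia.
  - destruct (Nat.eqb_spec j j0) as [->|]; [tauto|apply part_C0].
Qed.

Lemma lincomb_family_real_dep p m (v : nat -> Seq) gs : (m + m < p)%nat -> length gs = m ->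
  (forall j, (j < p)%nat -> exists cs, length cs = m /\ v j = lincomb cs gs) ->
  exists x : nat -> R, (exists j0, (j0 < p)%nat /\ x j0 <> 0) /\
    forall k b, fsum p (fun j => x j * part b (v j k)) = 0.
Proof.
  intros Hp Hgs Hv.
  set (cs := fun j => epsilon (inhabits nil) (fun cs => length cs = m /\ v j = lincomb cs gs)).
  assert (Hcs : forall j, (j < p)%nat -> length (cs j) = m /\ v j = lincomb (cs j) gs)
    by (intros j Hj; apply epsilon_spec, Hv, Hj).
  (* over the reals, each [v j] is a combination of the [2m] sequences [g_i] and [i g_i] *)
  destruct (fsum_lin_dep (list Z * bool) (m + m) p
     (fun j t => part (snd t) (v j (fst t)))
     (fun i t => if Nat.ltb i m then part (snd t) (nth i gs zero_seq (fst t))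
                 else part (snd t) (cmul (0, 1) (nth (i - m) gs zero_seq (fst t))))
     (fun j i => if Nat.ltb i m then fst (nth i (cs j) C0) else snd (nth (i - m) (cs j) C0)))
    as [x [Hx0 Hx]]; auto.
  - intros j [k b] Hj. simpl. destruct (Hcs j Hj) as [Hl ->].
    rewrite part_lincomb, Hl, fsum_add, <- fsum_plus by lia. apply fsum_ext. intros i Hi.
    destruct (Nat.ltb_spec i m), (Nat.ltb_spec (m + i) m); try lia.
    replace (m + i - m)%nat with i by lia. apply part_cmul.
  - exists x. split; auto. intros k b. exact (Hx (k, b)).
Qed.

(* Dimension count over the reals: [2N] basis sequences against [2m] generators. *)
Lemma kernel_on_support w S d m L (A : Seq -> Seq) gs :
  (forall k, 0 <= w k) -> NoDup L -> (forall k, In k L -> idx d k /\ S k) ->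
  (m < length L)%nat -> length gs = m ->
  (forall f g, inH w S d f -> inH w S d g -> A (sadd f g) = sadd (A f) (A g)) ->
  (forall a f, inH w S d f -> A (sscal a f) = sscal a (A f)) ->
  (forall f, inH w S d f -> exists cs, length cs = m /\ A f = lincomb cs gs) ->
  exists f, (forall k, ~ In k L -> f k = C0) /\ (forall k, A f k = C0) /\
            exists k, In k L /\ f k <> C0.
Proof.
  intros Hw HL HLk Hm Hgs Hadd Hsc Hspan.
  set (N := length L) in *.
  assert (HE : forall j, (j < N + N)%nat -> inH w S d (real_basis L j)).
  { intros j Hj. apply (inH_finite_support w S d _ L Hw HLk). intros k. now apply real_basis_support. }
  destruct (lincomb_family_real_dep (N + N) m (fun j => A (real_basis L j)) gs)
    as [x [[j0 [Hj0 Hx0]] Hx]]; auto; [lia|].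
  set (F := fun j => sscal (x j, 0) (real_basis L j)).
  assert (HFsupp : forall n k, (n <= N + N)%nat -> ~ In k L -> fsumS n F k = C0).
  { intros n k Hn Hk. apply fsumS_zero. intros j Hj. unfold F, sscal.
    rewrite real_basis_support by (auto; lia).
    unfold cmul, C0; apply injective_projections; simpl; ring. }
  assert (HFinH : forall n, (n <= N + N)%nat -> inH w S d (fsumS n F)).
  { intros n Hn. apply (inH_finite_support w S d _ L Hw HLk). intros k. now apply HFsupp. }
  exists (fsumS (N + N) F). split; [|split].
  - intros k. now apply HFsupp.
  - intros k. apply part_eq_C0. intros b.
    rewrite (linear_fsumS (inH w S d) A (N + N) F Hadd Hsc); auto.
    + rewrite part_fsumS, <- (Hx k b). apply fsum_ext. intros j Hj.
      unfold F. rewrite Hsc by auto. unfold sscal. apply part_cmul_real.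
    + intros j Hj. unfold F. apply (inH_finite_support w S d _ L Hw HLk).
      intros k' Hk'. unfold sscal. rewrite real_basis_support by auto.
      unfold cmul, C0; apply injective_projections; simpl; ring.
  - exists (nth (basis_pos N j0) L nil). split; [apply nth_In, basis_pos_lt; auto|]. intros E.
    apply Hx0. rewrite <- (part_C0 (Nat.ltb j0 N)), <- E, part_fsumS. unfold N.
    rewrite (fsum_delta _ j0); auto.
    + unfold F, sscal. rewrite part_cmul_real, part_real_basis, Nat.eqb_refl by auto. ring.
    + intros j Hj Hne. unfold F, sscal.
      rewrite part_cmul_real, part_real_basis by auto. destruct (Nat.eqb_spec j j0); [lia|ring].
Qed.

Lemma exists_sq_mul_lt eps W : 0 <= eps -> 0 < W -> eps ^ 2 * W < 1 ->
  exists delta, 0 < delta /\ (eps + delta) ^ 2 * W < 1.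
Proof.
  intros He HW H.
  set (g := 1 - eps ^ 2 * W).
  set (delta := Rmin 1 (g / (2 * (2 * eps + 1) * W))).
  assert (Hg : 0 < g / (2 * (2 * eps + 1) * W)) by (apply Rdiv_lt_0_compat; unfold g; nra).
  assert (Hd1 : delta <= 1) by apply Rmin_l.
  assert (Hd2 : delta * (2 * eps + 1) * W <= g / 2).
  { assert (delta <= g / (2 * (2 * eps + 1) * W)) by apply Rmin_r.
    replace (g / 2) with (g / (2 * (2 * eps + 1) * W) * (2 * eps + 1) * W) by (field; lra).
    apply Rmult_le_compat_r; [lra|]. apply Rmult_le_compat_r; lra. }
  exists delta. split; [apply Rmin_glb_lt; lra|].
  assert (0 < delta) by (apply Rmin_glb_lt; lra).
  assert (delta * delta * W <= delta * W) by (apply Rmult_le_compat_r; nra).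
  unfold g in Hd2. nra.
Qed.

(* A nonzero kernel vector [f] has error [|f|_2], although [|f|_H^2 <= W |f|_2^2]. *)
Lemma not_e_le_of_light_frequencies w S d m eps W L : (forall k, 0 <= w k) ->
  0 <= eps -> 0 < W -> eps ^ 2 * W < 1 -> NoDup L ->
  (forall k, In k L -> idx d k /\ S k /\ w k <= W) -> (m < length L)%nat -> ~ e_le w S d m eps.
Proof.
  intros Hw He HW HeW HL HLk Hm Hle.
  assert (HLk' : forall k, In k L -> idx d k /\ S k) by (intros k Hk; apply HLk in Hk; tauto).
  destruct (exists_sq_mul_lt eps W He HW HeW) as [delta [Hd HdW]].
  destruct (Hle delta Hd) as [A [gs [Hlen [_ [Hadd [Hsc [Hspan Herr]]]]]]].
  destruct (kernel_on_support w S d m L A gs Hw HL HLk' Hm Hlen Hadd Hsc Hspan)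
    as [f [Hsupp [HAf [k0 [Hk0 Hfk0]]]]].
  destruct (inH_finite_support w S d f L Hw HLk' Hsupp) as [HfH Hfsq].
  set (Q := lsum (fun k => cn2 (f k)) L).
  assert (HQ : 0 < Q).
  { apply Rlt_le_trans with (cn2 (f k0)).
    - destruct (f k0) as [x y] eqn:E. unfold cn2; simpl.
      assert (Hxy : x <> 0 \/ y <> 0) by (destruct (Req_dec x 0), (Req_dec y 0); subst; auto).
      destruct Hxy; nra.
    - apply (lsum_mem (fun k => cn2 (f k))); auto. intros; apply cn2_nonneg. }
  assert (Herr_L : lsum (fun k => one k * cn2 (ssub f (A f) k)) L = Q).
  { apply lsum_ext. intros k _. unfold one, ssub. rewrite HAf, Rmult_1_l.
    f_equal. destruct (f k); unfold cadd, cneg, C0; simpl; f_equal; ring. }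
  assert (Hnorm : lsum (fun k => w k * cn2 (f k)) L <= W * Q).
  { unfold Q. rewrite <- lsum_scal. apply lsum_le. intros k Hk.
    destruct (HLk k Hk) as [_ [_ Hwk]]. pose proof (cn2_nonneg (f k)). nra. }
  pose proof (Herr f _ HfH Hfsq L HL (fun k Hk => proj1 (HLk' k Hk))) as Hb.
  rewrite Herr_L in Hb.
  assert (0 <= (eps + delta) ^ 2) by apply pow2_ge_0.
  nra.
Qed.

(** * Information complexity and frequency sets *)

Lemma info_comp_exists w S d eps n : e_le w S d n eps -> exists n', IsInfoComp w S d eps n'.
Proof.
  intros Hn.
  destruct (dec_inh_nat_subset_has_unique_least_element (fun m => e_le w S d m eps))
    as [n' [[Hn' Hmin] _]]; [intros; apply classic|eauto|].
  exists n'. split; auto. intros m Hm Hle. specialize (Hmin m Hle). lia.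
Qed.

Lemma info_comp_le w S d eps n m : IsInfoComp w S d eps n -> e_le w S d m eps -> (n <= m)%nat.
Proof. intros [_ Hmin] Hm. destruct (Nat.le_gt_cases n m); auto. exfalso; eapply Hmin; eauto. Qed.

Local Open Scope nat_scope.

Definition zrange (B : nat) : list Z := map (fun i => (Z.of_nat i - Z.of_nat B)%Z) (seq 0 (2 * B + 1)).

Lemma zrange_length B : length (zrange B) = 2 * B + 1.
Proof. unfold zrange. now rewrite length_map, length_seq. Qed.

Lemma in_zrange B z : (Z.abs z <= Z.of_nat B)%Z -> In z (zrange B).
Proof.
  intros H. apply in_map_iff. exists (Z.to_nat (z + Z.of_nat B)).
  rewrite Z2Nat.id by lia. split; [lia|]. apply in_seq. lia.
Qed.

Lemma NoDup_map_cons (z : Z) l : NoDup l -> NoDup (map (cons z) l).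
Proof. apply NoDup_map_NoDup_ForallPairs. intros x y _ _ E. now inversion E. Qed.

Fixpoint box (B d : nat) : list (list Z) :=
  match d with O => [nil] | S d' => flat_map (fun z => map (cons z) (box B d')) (zrange B) end.

Lemma box_length B d : length (box B d) = (2 * B + 1) ^ d.
Proof.
  induction d; simpl; auto.
  rewrite (flat_map_constant_length (c := length (box B d))) by (intros; apply length_map).
  now rewrite zrange_length, IHd.
Qed.

Lemma box_idx B d k : In k (box B d) -> length k = d.
Proof.
  revert k; induction d; simpl; intros k H; [now destruct H as [<-|[]]|].
  apply in_flat_map in H. destruct H as [z [_ H]]. apply in_map_iff in H.
  destruct H as [k' [<- H]]. simpl; f_equal; auto.
Qed.

Lemma in_box B d k : length k = d -> Forall (fun z => (Z.abs z <= Z.of_nat B)%Z) k -> In k (box B d).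
Proof.
  revert k; induction d; intros [|z k] Hl Hf; simpl in *; try lia; auto.
  inversion Hf; subst. apply in_flat_map. exists z. split; [now apply in_zrange|].
  apply in_map, IHd; auto.
Qed.

Fixpoint nnz (k : list Z) : nat :=
  match k with nil => O | z :: k' => (if Z.eqb z 0 then 0 else 1) + nnz k' end.

(* vectors of [box B d] with at most [t] nonzero entries (possibly listed several times) *)
Fixpoint sparse (B d t : nat) : list (list Z) :=
  match d with
  | O => [nil]
  | S d' => map (cons 0%Z) (sparse B d' t) ++
      match t with O => nil | S t' => flat_map (fun z => map (cons z) (sparse B d' t')) (zrange B) end
  end.

Lemma sparse_idx B d t k : In k (sparse B d t) -> length k = d.
Proof.
  revert t k; induction d; simpl; intros t k H; [now destruct H as [<-|[]]|].
  apply in_app_or in H. destruct H as [H|H].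
  - apply in_map_iff in H. destruct H as [k' [<- H]]. simpl; f_equal; eauto.
  - destruct t; [destruct H|]. apply in_flat_map in H. destruct H as [z [_ H]].
    apply in_map_iff in H. destruct H as [k' [<- H]]. simpl; f_equal; eauto.
Qed.

Lemma in_sparse B d t k : length k = d -> Forall (fun z => (Z.abs z <= Z.of_nat B)%Z) k ->
  nnz k <= t -> In k (sparse B d t).
Proof.
  revert t k; induction d; intros t [|z k] Hl Hf Hn; simpl in *; try lia; auto.
  inversion Hf; subst. apply in_or_app. destruct (Z.eqb_spec z 0) as [->|Hz].
  - left. apply in_map, IHd; auto.
  - right. destruct t; [lia|]. apply in_flat_map. exists z. split; [now apply in_zrange|].
    apply in_map, IHd; auto. lia.
Qed.

Lemma sparse_length B d t : length (sparse B d t) <= ((2 * B + 1) * (d + 1)) ^ t.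
Proof.
  revert t; induction d; intros t; cbn [sparse length].
  - apply Nat.le_succ_l, Nat.neq_0_lt_0, Nat.pow_nonzero. lia.
  - rewrite length_app, length_map. destruct t as [|t].
    + specialize (IHd O). simpl in *. lia.
    + rewrite (flat_map_constant_length (c := length (sparse B d t))) by (intros; apply length_map).
      rewrite zrange_length. set (a := 2 * B + 1).
      pose proof (IHd (S t)) as H1. pose proof (IHd t) as H2. fold a in H1, H2.
      assert (Hmono : (a * (d + 1)) ^ t <= (a * (S d + 1)) ^ t) by (apply Nat.pow_le_mono_l; nia).
      rewrite Nat.pow_succ_r' in *.
      set (P := (a * (d + 1)) ^ t) in *. set (Q := (a * (S d + 1)) ^ t) in *.
      assert (a * length (sparse B d t) <= a * P) by (apply Nat.mul_le_mono_l; auto).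
      assert (a * (d + 1) * P + a * P <= a * (S d + 1) * Q).
      { replace (a * (d + 1) * P + a * P) with (a * (S d + 1) * P) by ring.
        apply Nat.mul_le_mono_l; auto. }
      lia.
Qed.

Fixpoint cube01 (d : nat) : list (list Z) :=
  match d with O => [nil] | S d' => map (cons 0%Z) (cube01 d') ++ map (cons 1%Z) (cube01 d') end.

Lemma cube01_length d : length (cube01 d) = 2 ^ d.
Proof. induction d; simpl; auto. rewrite length_app, !length_map, IHd. lia. Qed.

Lemma cube01_elem d k : In k (cube01 d) -> length k = d /\ Forall (fun z => z = 0%Z \/ z = 1%Z) k.
Proof.
  revert k; induction d; simpl; intros k H; [now destruct H as [<-|[]]|].
  apply in_app_or in H.
  destruct H as [H|H]; apply in_map_iff in H; destruct H as [k' [<- H]];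
    destruct (IHd k' H); simpl; split; auto.
Qed.

Lemma cube01_NoDup d : NoDup (cube01 d).
Proof.
  induction d; simpl; [repeat constructor; auto|].
  apply NoDup_app; try apply NoDup_map_cons; auto.
  intros a H1 H2. apply in_map_iff in H1, H2.
  destruct H1 as [x [<- _]], H2 as [y [Hy _]]. inversion Hy.
Qed.

Local Close Scope nat_scope.

(** * Asymptotics *)

Lemma exp_le x y : x <= y -> exp x <= exp y.
Proof. intros [H|H]; [left; now apply exp_increasing|subst; lra]. Qed.

Lemma ln_le x y : 0 < x -> x <= y -> ln x <= ln y.
Proof. intros Hx [H|H]; [left; now apply ln_increasing|subst; lra]. Qed.

Lemma ln_0 : ln 0 = 0.
Proof. unfold ln. destruct (Rlt_dec 0 0) as [r|]; [destruct (Rlt_irrefl 0 r)|reflexivity]. Qed.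

Lemma ln_INR_nonneg n : 0 <= ln (INR n).
Proof.
  destruct n as [|n].
  - simpl. rewrite ln_0. lra.
  - rewrite <- ln_1. apply ln_le; [lra|]. rewrite S_INR. pose proof (pos_INR n). lra.
Qed.

Lemma ln_INR_le n N : (n <= N)%nat -> ln (INR n) <= ln (INR N).
Proof.
  intros H. destruct n as [|n].
  - simpl. rewrite ln_0. apply ln_INR_nonneg.
  - apply ln_le, le_INR; auto. apply lt_0_INR. lia.
Qed.

Lemma ln_inv_nonneg eps : 0 < eps <= 1 -> 0 <= ln (/ eps).
Proof. intros He. rewrite <- ln_1. apply ln_le; [lra|]. rewrite <- Rinv_1. apply Rinv_le_contravar; lra. Qed.

Lemma exp_2_ln_inv eps : 0 < eps -> exp (2 * ln (/ eps)) = / eps ^ 2.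
Proof.
  intros He. replace (2 * ln (/ eps)) with (ln (/ eps) + ln (/ eps)) by ring.
  rewrite exp_plus, exp_ln by (apply Rinv_0_lt_compat; auto). simpl. field. lra.
Qed.

Lemma up_nat r : 0 <= r -> exists N : nat, r < INR N /\ INR N <= r + 1.
Proof.
  intros Hr. destruct (archimed r) as [h1 h2]. exists (Z.to_nat (up r)).
  assert (0 < up r)%Z by (apply lt_IZR; lra).
  rewrite INR_IZR_INZ, Z2Nat.id by lia. lra.
Qed.

Lemma sq_le_exp y : 0 <= y -> y ^ 2 / 4 <= exp y.
Proof.
  intros Hy. replace y with (y / 2 + y / 2) at 2 by field. rewrite exp_plus.
  pose proof (exp_ineq1_le (y / 2)). nra.
Qed.

Lemma affine_le_exp k1 k2 kap eta : 0 <= k1 -> 0 <= k2 -> 0 < kap -> 0 < eta ->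
  exists T, forall s, T <= s -> k1 + k2 * s <= eta * exp (kap * s).
Proof.
  intros H1 H2 Hk He.
  exists (Rmax 1 (4 * (k1 + k2) / (eta * kap ^ 2))). intros s Hs.
  assert (Hs1 : 1 <= s) by (pose proof (Rmax_l 1 (4 * (k1 + k2) / (eta * kap ^ 2))); lra).
  assert (Hek : 0 < eta * kap ^ 2) by (apply Rmult_lt_0_compat; auto; apply pow_lt; auto).
  assert (Hs2 : 4 * (k1 + k2) <= s * (eta * kap ^ 2)).
  { pose proof (Rmax_r 1 (4 * (k1 + k2) / (eta * kap ^ 2))).
    apply Rmult_le_compat_r with (r := eta * kap ^ 2) in H; [|lra].
    unfold Rdiv in *. rewrite Rmult_assoc, Rinv_l in H by lra. nra. }
  pose proof (sq_le_exp (kap * s) ltac:(nra)).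
  assert (k1 + k2 * s <= (k1 + k2) * s) by nra.
  assert ((k1 + k2) * s <= eta * ((kap * s) ^ 2 / 4)).
  { replace (eta * ((kap * s) ^ 2 / 4)) with (s * (s * (eta * kap ^ 2)) / 4) by (simpl; field). nra. }
  nra.
Qed.

Lemma exp_dominates theta k1 k2 eta : theta < 1 -> 0 <= k1 -> 0 <= k2 -> 0 < eta ->
  exists T, forall s, T <= s -> exp (theta * s) * (k1 + k2 * s) <= eta * exp s.
Proof.
  intros Hth H1 H2 He.
  destruct (affine_le_exp k1 k2 (1 - theta) eta H1 H2 ltac:(lra) He) as [T HT].
  exists T. intros s Hs.
  replace (exp s) with (exp (theta * s) * exp ((1 - theta) * s)) by (rewrite <- exp_plus; f_equal; ring).
  pose proof (exp_pos (theta * s)). pose proof (HT s Hs). nra.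
Qed.

Lemma ln_odd_le B x : 0 <= x -> INR B <= exp x + 1 -> ln (INR (2 * B + 1)) <= ln 5 + x.
Proof.
  intros Hx HB. rewrite <- (ln_exp x), <- ln_mult by (lra || apply exp_pos).
  assert (1 <= exp x) by (rewrite <- exp_0; now apply exp_le).
  apply ln_le; [apply lt_0_INR; lia|]. rewrite plus_INR, mult_INR. simpl. lra.
Qed.

Lemma ln_succ_le d : (1 <= d)%nat -> ln (INR (d + 1)) <= ln 2 + ln (INR d).
Proof.
  intros Hd. assert (1 <= INR d) by (apply (le_INR 1); auto).
  rewrite <- ln_mult by lra. apply ln_le; [apply lt_0_INR; lia|]. rewrite plus_INR. simpl. lra.
Qed.

Lemma ln5_ln10_nonneg : 0 <= ln 5 /\ 0 <= ln 10.
Proof. rewrite <- ln_1. split; apply ln_le; lra. Qed.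

(* Both bounds on [ln n(eps,d)] are subexponential in [s = max (alpha a) (beta b)], where
   [a = ln eps^-1] and [b = ln d]: the first one if [beta > 1], the second one if [alpha > 2]. *)
Lemma ln_bound_le_exp_max alpha beta c : 0 < alpha -> 0 < beta -> 0 < c ->
  (2 < alpha \/ 1 < beta) ->
  exists theta k1 k2, theta < 1 /\ 0 <= k1 /\ 0 <= k2 /\
  forall a b L, 0 <= a -> 0 <= b ->
    L <= exp b * (ln 5 + a / c) -> L <= 2 * exp (2 * a) * (ln 10 + a / c + b) ->
    L <= exp (theta * Rmax (alpha * a) (beta * b)) * (k1 + k2 * Rmax (alpha * a) (beta * b)).
Proof.
  intros Hal Hbe Hc Hcase. destruct ln5_ln10_nonneg as [Hl5 Hl10].
  assert (Hac : 0 < / (alpha * c)) by (apply Rinv_0_lt_compat; nra).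
  assert (Hmax : forall a b, a <= Rmax (alpha * a) (beta * b) / alpha /\ b <= Rmax (alpha * a) (beta * b) / beta).
  { intros a b. pose proof (Rmax_l (alpha * a) (beta * b)); pose proof (Rmax_r (alpha * a) (beta * b)).
    split; [apply (Rmult_le_reg_l alpha)|apply (Rmult_le_reg_l beta)]; auto; field_simplify; lra. }
  destruct Hcase as [H2|H1].
  - exists (2 / alpha), (2 * ln 10), (2 * (/ (alpha * c) + / beta)).
    split; [apply (Rmult_lt_reg_r alpha); auto; field_simplify; lra|].
    split; [lra|]. split; [pose proof (Rinv_0_lt_compat beta Hbe); lra|].
    intros a b L Ha Hb _ HL. destruct (Hmax a b) as [Ha' Hb']. set (s := Rmax _ _) in *.
    assert (Hexp : exp (2 * a) <= exp (2 / alpha * s)).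
    { apply exp_le. replace (2 / alpha * s) with (2 * (s / alpha)) by (field; lra). lra. }
    assert (Hlin : ln 10 + a / c + b <= ln 10 + s / (alpha * c) + s / beta).
    { replace (s / (alpha * c)) with (s / alpha / c) by (field; lra).
      assert (a / c <= s / alpha / c) by (apply Rmult_le_compat_r; [left; now apply Rinv_0_lt_compat|lra]).
      lra. }
    assert (0 <= ln 10 + a / c + b) by (assert (0 <= a / c) by (apply Rmult_le_pos; [lra|left; now apply Rinv_0_lt_compat]); lra).
    pose proof (exp_pos (2 * a)).
    apply Rle_trans with (2 * exp (2 / alpha * s) * (ln 10 + s / (alpha * c) + s / beta)).
    + apply Rle_trans with (1 := HL). apply Rmult_le_compat; nra.
    + right. unfold Rdiv. ring.
  - exists (/ beta), (ln 5), (/ (alpha * c)).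
    split; [rewrite <- Rinv_1; apply Rinv_lt_contravar; lra|]. split; [lra|]. split; [lra|].
    intros a b L Ha Hb HL _. destruct (Hmax a b) as [Ha' Hb']. set (s := Rmax _ _) in *.
    assert (Hexp : exp b <= exp (/ beta * s)) by (apply exp_le; unfold Rdiv in Hb'; lra).
    assert (Hlin : a / c <= / (alpha * c) * s).
    { replace (/ (alpha * c) * s) with (s / alpha / c) by (field; lra).
      apply Rmult_le_compat_r; [left; now apply Rinv_0_lt_compat|lra]. }
    assert (0 <= a / c) by (apply Rmult_le_pos; [lra|left; now apply Rinv_0_lt_compat]).
    pose proof (exp_pos b).
    apply Rle_trans with (1 := HL). apply Rmult_le_compat; lra.
Qed.

Lemma ln_bound_negligible alpha beta c eta : 0 < alpha -> 0 < beta -> 0 < c -> 0 < eta ->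
  (2 < alpha \/ 1 < beta) ->
  exists M, forall a b L, 0 <= a -> 0 <= b -> exp a + exp b > M ->
    L <= exp b * (ln 5 + a / c) -> L <= 2 * exp (2 * a) * (ln 10 + a / c + b) ->
    L <= eta * (exp (alpha * a) + exp (beta * b)).
Proof.
  intros Hal Hbe Hc He Hcase.
  destruct (ln_bound_le_exp_max alpha beta c Hal Hbe Hc Hcase) as [theta [k1 [k2 [Hth [Hk1 [Hk2 Hbound]]]]]].
  destruct (exp_dominates theta k1 k2 eta Hth Hk1 Hk2 He) as [T HT].
  exists (exp (T / alpha) + exp (T / beta)). intros a b L Ha Hb HM HL1 HL2.
  pose proof (Hbound a b L Ha Hb HL1 HL2) as HL.
  pose proof (Rmax_l (alpha * a) (beta * b)); pose proof (Rmax_r (alpha * a) (beta * b)).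
  assert (Hs : exp (Rmax (alpha * a) (beta * b)) <= exp (alpha * a) + exp (beta * b)).
  { pose proof (exp_pos (alpha * a)); pose proof (exp_pos (beta * b)).
    unfold Rmax. destruct (Rle_dec _ _); lra. }
  set (s := Rmax (alpha * a) (beta * b)) in *.
  assert (HTs : T <= s).
  { destruct (Rle_or_lt T s) as [|Hlt]; auto. exfalso.
    assert (exp a < exp (T / alpha)).
    { apply exp_increasing, (Rmult_lt_reg_l alpha); auto. field_simplify; lra. }
    assert (exp b < exp (T / beta)).
    { apply exp_increasing, (Rmult_lt_reg_l beta); auto. field_simplify; lra. }
    lra. }
  pose proof (HT s HTs). nra.
Qed.

Lemma Rpower_sum_le_4d d alpha beta : (1 <= d)%nat -> 0 < alpha <= 2 -> 0 < beta <= 1 ->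
  Rpower (sqrt (INR d + 2)) alpha + Rpower (INR d) beta <= 4 * INR d.
Proof.
  intros Hd Ha Hb. assert (Hdr : 1 <= INR d) by (apply (le_INR 1); auto).
  set (s := sqrt (INR d + 2)).
  assert (Hss : s * s = INR d + 2) by (apply sqrt_sqrt; lra).
  assert (Hs1 : 1 <= s) by (unfold s; rewrite <- sqrt_1; apply sqrt_le_1_alt; lra).
  assert (Hs : Rpower s alpha <= INR d + 2).
  { apply Rle_trans with (Rpower s (INR 2)); [apply Rle_Rpower; simpl; lra|].
    rewrite Rpower_pow by lra. simpl. lra. }
  assert (Hd' : Rpower (INR d) beta <= INR d).
  { rewrite <- (Rpower_1 (INR d)) at 2 by lra. apply Rle_Rpower; lra. }
  lra.
Qed.

(** * Weights controlling the size and the support of the frequencies *)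

Section AdmissibleWeight.

Variables (w : list Z -> R) (S : list Z -> Prop) (c : R).
Hypothesis c_pos : 0 < c.
Hypothesis w_ge1 : forall k, 1 <= w k.
Hypothesis nnz_le_w : forall k, S k -> INR (nnz k) <= w k - 1.
Hypothesis pw_le_w : forall k, S k -> Forall (fun z => pw z c <= w k - 1) k.
Hypothesis cube01_w : forall k, Forall (fun z => z = 0%Z \/ z = 1%Z) k -> S k /\ w k <= 1 + INR (length k).

Let w_nonneg k : 0 <= w k.
Proof. pose proof (w_ge1 k). lra. Qed.

Lemma light_frequency_bounds eps k : 0 < eps -> S k -> eps ^ 2 * w k < 1 ->
  Forall (fun z => IZR (Z.abs z) < exp (ln (/ eps) / c)) k /\ INR (nnz k) < exp (2 * ln (/ eps)).
Proof.
  intros He HS Hk.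
  assert (Hwk : w k - 1 < exp (2 * ln (/ eps))).
  { rewrite exp_2_ln_inv by auto. apply (Rmult_lt_reg_l (eps ^ 2)); [apply pow_lt; lra|].
    rewrite Rinv_r by (apply pow_nonzero; lra). pose proof (pow_lt eps 2 He). nra. }
  split; [|pose proof (nnz_le_w k HS); lra].
  apply (Forall_impl (P := fun z => pw z c <= w k - 1)); [|exact (pw_le_w k HS)].
  intros z Hz. unfold pw in Hz.
  destruct (Z.eqb_spec z 0) as [Hz0|Hz0]; [rewrite Hz0; simpl; apply exp_pos|].
  assert (H1 : 1 <= IZR (Z.abs z)) by (apply IZR_le; lia).
  unfold Rpower in Hz.
  assert (Hln : 2 * c * ln (IZR (Z.abs z)) < 2 * ln (/ eps)) by (apply exp_lt_inv; lra).
  rewrite <- (exp_ln (IZR (Z.abs z))) by lra. apply exp_increasing.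
  apply (Rmult_lt_reg_l (2 * c)); [lra|]. field_simplify; lra.
Qed.

Lemma info_comp_le_counts eps d B t : 0 < eps ->
  exp (ln (/ eps) / c) < INR B -> exp (2 * ln (/ eps)) < INR t ->
  (exists n, IsInfoComp w S d eps n) /\
  forall n, IsInfoComp w S d eps n ->
    (n <= (2 * B + 1) ^ d)%nat /\ (n <= ((2 * B + 1) * (d + 1)) ^ t)%nat.
Proof.
  intros He HB Ht.
  assert (Hlight : forall k, idx d k -> S k -> eps ^ 2 * w k < 1 ->
            Forall (fun z => (Z.abs z <= Z.of_nat B)%Z) k /\ (nnz k <= t)%nat).
  { intros k Hk HS Hw. destruct (light_frequency_bounds eps k He HS Hw) as [Hz Hn]. split.
    - eapply Forall_impl; [|exact Hz]. intros z Hzb.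
      apply Z.lt_le_incl, lt_IZR. rewrite <- INR_IZR_INZ. lra.
    - apply Nat.lt_le_incl, INR_lt. lra. }
  assert (Hcover : forall L, (forall k, In k L -> idx d k) ->
            (forall k, idx d k -> S k -> eps ^ 2 * w k < 1 -> In k L) ->
            e_le w S d (length (nodup zlist_eq_dec L)) eps /\
            (length (nodup zlist_eq_dec L) <= length L)%nat).
  { intros L HL HinL. split.
    - apply e_le_truncation; auto. intros k Hk HS HnL.
      destruct (Rle_or_lt 1 (eps ^ 2 * w k)) as [|Hlt]; auto. exfalso. apply HnL, HinL; auto.
    - apply NoDup_incl_length; [apply NoDup_nodup|]. intros x Hx. now apply nodup_In in Hx. }
  destruct (Hcover (box B d)) as [Hbox Hbox_len]; [apply box_idx|
    intros k Hk HS Hw; apply in_box; [auto|apply Hlight; auto]|].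
  destruct (Hcover (sparse B d t)) as [Hsp Hsp_len]; [intros k; apply sparse_idx|
    intros k Hk HS Hw; destruct (Hlight k Hk HS Hw); apply in_sparse; auto|].
  rewrite box_length in Hbox_len. pose proof (sparse_length B d t).
  split; [eapply info_comp_exists; eauto|].
  intros n Hn. split.
  - pose proof (info_comp_le _ _ _ _ _ _ Hn Hbox). lia.
  - pose proof (info_comp_le _ _ _ _ _ _ Hn Hsp). lia.
Qed.

Lemma info_comp_upper eps d : 0 < eps < 1 -> (1 <= d)%nat ->
  (exists n, IsInfoComp w S d eps n) /\
  forall n, IsInfoComp w S d eps n ->
    ln (INR n) <= INR d * (ln 5 + ln (/ eps) / c) /\
    ln (INR n) <= 2 * exp (2 * ln (/ eps)) * (ln 10 + ln (/ eps) / c + ln (INR d)).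
Proof.
  intros He Hd. set (a := ln (/ eps)).
  assert (Ha : 0 <= a) by (apply ln_inv_nonneg; lra).
  assert (Hac : 0 <= a / c) by (apply Rmult_le_pos; [lra|left; now apply Rinv_0_lt_compat]).
  destruct (up_nat (exp (a / c))) as [B [HB1 HB2]]; [left; apply exp_pos|].
  destruct (up_nat (exp (2 * a))) as [t [Ht1 Ht2]]; [left; apply exp_pos|].
  destruct (info_comp_le_counts eps d B t (proj1 He) HB1 Ht1) as [Hex Hcounts].
  split; auto. intros n Hn. destruct (Hcounts n Hn) as [N1 N2].
  pose proof (ln_odd_le B (a / c) Hac HB2) as HlnB.
  assert (HlnB0 : 0 <= ln (INR (2 * B + 1))) by apply ln_INR_nonneg.
  assert (Hpos : (0 < 2 * B + 1)%nat) by lia.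
  split.
  - eapply Rle_trans; [apply (ln_INR_le _ _ N1)|].
    rewrite pow_INR, ln_pow by (apply lt_0_INR; lia).
    apply Rmult_le_compat_l; [apply pos_INR|auto].
  - eapply Rle_trans; [apply (ln_INR_le _ _ N2)|].
    assert (0 < INR (2 * B + 1)) by (apply lt_0_INR; lia).
    assert (0 < INR (d + 1)) by (apply lt_0_INR; lia).
    rewrite pow_INR, mult_INR, ln_pow, ln_mult by (auto; now apply Rmult_lt_0_compat).
    pose proof (ln_succ_le d Hd). pose proof (ln_INR_nonneg (d + 1)).
    assert (Hl10 : ln 10 = ln 5 + ln 2) by (rewrite <- ln_mult by lra; f_equal; lra).
    assert (1 <= exp (2 * a)) by (rewrite <- exp_0; apply exp_le; lra).
    pose proof (pos_INR t).
    apply Rle_trans with (2 * exp (2 * a) * (ln (INR (2 * B + 1)) + ln (INR (d + 1)))).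
    + apply Rmult_le_compat_r; lra.
    + apply Rmult_le_compat_l; lra.
Qed.

Lemma pow2_le_info_comp d n : IsInfoComp w S d (/ sqrt (INR d + 2)) n -> (2 ^ d <= n)%nat.
Proof.
  intros [Hn _]. set (s := sqrt (INR d + 2)) in *.
  pose proof (pos_INR d).
  assert (Hss : s * s = INR d + 2) by (apply sqrt_sqrt; lra).
  assert (Hs : 0 < s) by (apply sqrt_lt_R0; lra).
  destruct (Nat.le_gt_cases (2 ^ d) n) as [|Hlt]; auto. exfalso.
  apply (not_e_le_of_light_frequencies w S d n (/ s) (1 + INR d) (cube01 d) w_nonneg) in Hn; auto.
  - left; now apply Rinv_0_lt_compat.
  - lra.
  - replace ((/ s) ^ 2 * (1 + INR d)) with ((1 + INR d) / (s * s)) by (simpl; field; lra).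
    rewrite Hss. apply (Rmult_lt_reg_r (INR d + 2)); [lra|]. field_simplify; lra.
  - apply cube01_NoDup.
  - intros k Hk. destruct (cube01_elem d k Hk) as [Hl Hf]. destruct (cube01_w k Hf).
    rewrite Hl in *. repeat split; auto.
  - now rewrite cube01_length.
Qed.

Lemma WT_of_large_exponent alpha beta : 0 < alpha -> 0 < beta -> (2 < alpha \/ 1 < beta) ->
  WT w S alpha beta.
Proof.
  intros Ha Hb Hcase. split; [intros eps d He Hd; apply (info_comp_upper eps d He Hd)|].
  intros eta Heta. destruct (ln_bound_negligible alpha beta c eta Ha Hb c_pos Heta Hcase) as [M HM].
  exists M. intros eps d n He Hd HM' Hn.
  destruct (info_comp_upper eps d He Hd) as [_ Hup]. destruct (Hup n Hn) as [U1 U2].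
  assert (Hie : 0 < / eps) by (apply Rinv_0_lt_compat; lra).
  assert (Hdr : 1 <= INR d) by (apply (le_INR 1); auto).
  assert (Hb0 : 0 <= ln (INR d)) by (rewrite <- ln_1; apply ln_le; lra).
  unfold Rpower.
  set (D := exp (alpha * ln (/ eps)) + exp (beta * ln (INR d))).
  assert (HD : 0 < D) by (pose proof (exp_pos (alpha * ln (/ eps))); pose proof (exp_pos (beta * ln (INR d))); unfold D; lra).
  assert (HL : ln (INR n) <= eta * D).
  { apply HM; auto; [apply ln_inv_nonneg; lra|rewrite !exp_ln; lra|rewrite exp_ln; lra]. }
  pose proof (ln_INR_nonneg n).
  rewrite Rabs_pos_eq by (apply Rmult_le_pos; [auto|left; now apply Rinv_0_lt_compat]).
  apply (Rmult_le_reg_r D); auto. unfold Rdiv. rewrite Rmult_assoc, Rinv_l; lra.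
Qed.

(* At [eps = (d + 2)^(-1/2)] the [2^d] frequencies of [{0,1}^d] force [n(eps,d) >= 2^d],
   while [eps^-alpha + d^beta <= 4 d]. *)
Lemma not_WT_of_small_exponents alpha beta : 0 < alpha <= 2 -> 0 < beta <= 1 -> ~ WT w S alpha beta.
Proof.
  intros Ha Hb [Hex Hlim].
  assert (Hl2 : 0 < ln 2) by (rewrite <- ln_1; apply ln_increasing; lra).
  destruct (Hlim (ln 2 / 5)) as [M HM]; [lra|].
  destruct (up_nat (Rabs M)) as [d [HdM _]]; [apply Rabs_pos|].
  pose proof (Rle_abs M). pose proof (Rabs_pos M).
  assert (Hd : (1 <= d)%nat) by (apply INR_lt; simpl; lra).
  assert (Hdr : 1 <= INR d) by (apply (le_INR 1); auto).
  set (s := sqrt (INR d + 2)).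
  assert (Hs1 : 1 < s) by (unfold s; rewrite <- sqrt_1; apply sqrt_lt_1_alt; lra).
  assert (He : 0 < / s < 1).
  { split; [apply Rinv_0_lt_compat; lra|]. rewrite <- Rinv_1. apply Rinv_lt_contravar; lra. }
  destruct (Hex (/ s) d He Hd) as [n Hn].
  assert (Hlow : INR d * ln 2 <= ln (INR n)).
  { pose proof (pow2_le_info_comp d n Hn) as H2.
    rewrite <- ln_pow by lra.
    replace (2 ^ d) with (INR (2 ^ d)) by (rewrite pow_INR; f_equal; simpl; lra).
    now apply ln_INR_le. }
  specialize (HM (/ s) d n He Hd ltac:(rewrite Rinv_inv; lra) Hn).
  rewrite Rinv_inv in HM. pose proof (Rpower_sum_le_4d d alpha beta Hd Ha Hb) as HD.
  fold s in HD. set (D := Rpower s alpha + Rpower (INR d) beta) in *.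
  assert (HD0 : 0 < D) by (unfold D, Rpower; pose proof (exp_pos (alpha * ln s)); pose proof (exp_pos (beta * ln (INR d))); lra).
  assert (HnD : ln (INR n) <= ln 2 / 5 * D).
  { assert (Hq : ln (INR n) / D <= ln 2 / 5) by (pose proof (Rle_abs (ln (INR n) / D)); lra).
    apply (Rmult_le_compat_r D) in Hq; [|lra].
    unfold Rdiv in Hq at 1. rewrite Rmult_assoc, Rinv_l, Rmult_1_r in Hq by lra. lra. }
  nra.
Qed.

Theorem WT_iff alpha beta : 0 < alpha -> 0 < beta ->
  (WT w S alpha beta <-> ((alpha > 2 /\ beta > 0) \/ (alpha > 0 /\ beta > 1))).
Proof.
  intros Ha Hb. split.
  - intros HW. destruct (Rle_or_lt alpha 2), (Rle_or_lt beta 1); try lra.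
    exfalso. apply (not_WT_of_small_exponents alpha beta); auto; lra.
  - intros Hcase. apply WT_of_large_exponent; auto. lra.
Qed.

End AdmissibleWeight.

(** * The two weights *)

Lemma pw_nonneg z r : 0 <= pw z r.
Proof. unfold pw. destruct (Z.eqb z 0); [lra|left; apply exp_pos]. Qed.

Lemma pw_mono z r r' : r <= r' -> pw z r <= pw z r'.
Proof.
  intros H. unfold pw. destruct (Z.eqb_spec z 0); [lra|].
  apply Rle_Rpower; [apply IZR_le; lia|lra].
Qed.

Lemma pw_ge1 z r : z <> 0%Z -> 0 <= r -> 1 <= pw z r.
Proof.
  intros Hz Hr. unfold pw. destruct (Z.eqb_spec z 0); [tauto|].
  rewrite <- (Rpower_O (IZR (Z.abs z))) by (apply IZR_lt; lia).
  apply Rle_Rpower; [apply IZR_le; lia|lra].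
Qed.

Lemma pw_small z r : (Z.abs z <= 1)%Z -> pw z r = IZR (Z.abs z).
Proof.
  intros H. unfold pw. destruct (Z.eqb_spec z 0) as [->|Hz]; [reflexivity|].
  replace (Z.abs z) with 1%Z by lia. unfold Rpower. rewrite ln_1, Rmult_0_r. apply exp_0.
Qed.

Lemma wsumR_nonneg Rs j k : 0 <= wsumR Rs j k.
Proof.
  revert j; induction k as [|z k IH]; intros j; simpl; [lra|].
  pose proof (pw_nonneg z (Rs j)); pose proof (IH (S j)); lra.
Qed.

Lemma nnz_le_wsumR Rs j k : (forall j', (j <= j')%nat -> 0 <= Rs j') -> INR (nnz k) <= wsumR Rs j k.
Proof.
  revert j; induction k as [|z k IH]; intros j HR; simpl; [lra|].
  rewrite plus_INR. pose proof (IH (S j) ltac:(intros; apply HR; lia)).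
  destruct (Z.eqb_spec z 0) as [->|Hz]; simpl.
  - pose proof (pw_nonneg 0 (Rs j)). lra.
  - pose proof (pw_ge1 z (Rs j) Hz (HR j (le_n j))). lra.
Qed.

Lemma pw_le_wsumR Rs c j k : (forall j', (j <= j')%nat -> c <= Rs j') ->
  Forall (fun z => pw z c <= wsumR Rs j k) k.
Proof.
  revert j; induction k as [|z k IH]; intros j HR; constructor; simpl.
  - pose proof (pw_mono z c (Rs j) (HR j (le_n j))). pose proof (wsumR_nonneg Rs (S j) k). lra.
  - eapply Forall_impl; [|apply (IH (S j)); intros; apply HR; lia].
    intros z' Hz'. pose proof (pw_nonneg z (Rs j)). simpl in *. lra.
Qed.

Lemma wsumR_cube01 Rs j k : Forall (fun z => z = 0%Z \/ z = 1%Z) k -> wsumR Rs j k <= INR (length k).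
Proof.
  revert j; induction k as [|z k IH]; intros j H; cbn [wsumR length]; [simpl; lra|].
  inversion H as [|? ? Hz Hk]; subst. rewrite S_INR, pw_small by (destruct Hz; subst; simpl; lia).
  pose proof (IH (S j) Hk). destruct Hz as [->| ->]; simpl; lra.
Qed.

Lemma abs_le_abssum k : Forall (fun z => IZR (Z.abs z) <= abssum k) k.
Proof.
  induction k as [|z k IH]; constructor; simpl.
  - pose proof (IZR_le _ _ (Z.abs_nonneg z)).
    assert (0 <= abssum k) by (clear IH; induction k; simpl; [lra|pose proof (IZR_le _ _ (Z.abs_nonneg a)); lra]).
    lra.
  - eapply Forall_impl; [|exact IH]. intros z' Hz'. simpl in *.
    pose proof (IZR_le _ _ (Z.abs_nonneg z)). lra.
Qed.

Lemma nnz_le_abssum k : INR (nnz k) <= abssum k.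
Proof.
  induction k as [|z k IH]; simpl; [lra|]. rewrite plus_INR.
  destruct (Z.eqb_spec z 0) as [->|Hz]; simpl; [lra|].
  assert (1 <= IZR (Z.abs z)) by (apply IZR_le; lia). lra.
Qed.

Lemma abssum_cube01 k : Forall (fun z => z = 0%Z \/ z = 1%Z) k -> abssum k <= INR (length k).
Proof.
  induction k as [|z k IH]; intros H; cbn [abssum length]; [simpl; lra|].
  inversion H as [|? ? Hz Hk]; subst. rewrite S_INR. pose proof (IH Hk).
  destruct Hz as [->| ->]; simpl; lra.
Qed.

Lemma wR_ge1 Rs k : 1 <= wR Rs k.
Proof. unfold wR. pose proof (wsumR_nonneg Rs 1 k). lra. Qed.

Lemma nnz_le_wR Rs : (forall j, (1 <= j)%nat -> 0 < Rs j) ->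
  forall k, SR k -> INR (nnz k) <= wR Rs k - 1.
Proof.
  intros HR k _. unfold wR. replace (1 + wsumR Rs 1 k - 1) with (wsumR Rs 1 k) by ring.
  apply nnz_le_wsumR. intros j Hj. left. now apply HR.
Qed.

Lemma pw_le_wR Rs c : (forall j, (1 <= j)%nat -> c <= Rs j) ->
  forall k, SR k -> Forall (fun z => pw z c <= wR Rs k - 1) k.
Proof.
  intros HR k _. unfold wR. replace (1 + wsumR Rs 1 k - 1) with (wsumR Rs 1 k) by ring.
  now apply pw_le_wsumR.
Qed.

Lemma wR_cube01 Rs k : Forall (fun z => z = 0%Z \/ z = 1%Z) k -> SR k /\ wR Rs k <= 1 + INR (length k).
Proof. intros H. split; [exact I|]. unfold wR. pose proof (wsumR_cube01 Rs 1 k H). lra. Qed.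

Lemma wInf_ge1 k : 1 <= wInf k.
Proof. unfold wInf. pose proof (nnz_le_abssum k). pose proof (pos_INR (nnz k)). lra. Qed.

Lemma nnz_le_wInf k : SInf k -> INR (nnz k) <= wInf k - 1.
Proof. intros _. unfold wInf. pose proof (nnz_le_abssum k). lra. Qed.

Lemma pw_le_wInf c k : SInf k -> Forall (fun z => pw z c <= wInf k - 1) k.
Proof.
  intros HS. pose proof (abs_le_abssum k) as Habs. unfold SInf, wInf in *.
  rewrite Forall_forall in *. intros z Hz.
  rewrite pw_small by (specialize (HS z Hz); lia). specialize (Habs z Hz). lra.
Qed.

Lemma wInf_cube01 k : Forall (fun z => z = 0%Z \/ z = 1%Z) k -> SInf k /\ wInf k <= 1 + INR (length k).
Proof.
  intros H. split.
  - eapply Forall_impl; [|exact H]. intros z [->| ->]; lia.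
  - unfold wInf. pose proof (abssum_cube01 k H). lra.
Qed.

Theorem theorem2p4 (Rs : nat -> R)
  (Rs_pos : forall j, (1 <= j)%nat -> 0 < Rs j)
  (Rs_inf : exists c, 0 < c /\ forall j, (1 <= j)%nat -> c <= Rs j)
  (alpha beta : R) (halpha : 0 < alpha) (hbeta : 0 < beta) :
  (WT (wR Rs) SR alpha beta <->
     ((alpha > 2 /\ beta > 0) \/ (alpha > 0 /\ beta > 1))) /\
  (WT wInf SInf alpha beta <->
     ((alpha > 2 /\ beta > 0) \/ (alpha > 0 /\ beta > 1))) /\
  ~ WT (wR Rs) SR 1 1 /\ ~ WT wInf SInf 1 1.
Proof.
  destruct Rs_inf as [c [Hc Hcj]].
  pose proof (WT_iff (wR Rs) SR c Hc (wR_ge1 Rs) (nnz_le_wR Rs Rs_pos) (pw_le_wR Rs c Hcj)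
                (wR_cube01 Rs)) as HR.
  pose proof (WT_iff wInf SInf c Hc wInf_ge1 nnz_le_wInf (pw_le_wInf c) wInf_cube01) as HI.
  split; [now apply HR|]. split; [now apply HI|].
  split; [rewrite (HR 1 1)|rewrite (HI 1 1)]; lra.
Qed.
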